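(* Let $E$ be finite, $\Omega=E^{\mathbb{Z}}$ with left shift $S$, and let $\phi:\Omega\to\mathbb{R}$ be continuous with the extensibility property. Then for every pair $\xi,\eta\in\Omega$ such that $\{k\in\mathbb{Z}:\xi_k\ne\eta_k\}$ is finite, the sequence $\rho_n(\xi,\eta)=\sum_{i=-n}^{n}[\phi(S^i\xi)-\phi(S^i\eta)]$, $n\ge0$, converges; denote the limit by $\rho(\xi,\eta)$. Moreover: (1) $\rho$ is a cocycle: for all $\xi,\eta,\zeta\in\Omega$ with $\xi_i=\eta_i=\zeta_i$ for all but finitely many $i$, $\rho(\xi,\zeta)=\rho(\xi,\eta)+\rho(\eta,\zeta)$; (2) $\rho$ is translation-invariant: $\rho(\xi,\eta)=\rho(S\xi,S\eta)$ whenever $\{k:\xi_k\ne\eta_k\}$ is finite; (3) for every finite $\Lambda\subset\mathbb{Z}$ and all $\eta_\Lambda,\zeta_\Lambda\in E^\Lambda$, the map $\xi\mapsto\rho(\eta_\Lambda\xi_{\mathbb{Z}\setminus\Lambda},\zeta_\Lambda\xi_{\mathbb{Z}\setminus\Lambda})$ is continuous on $\Omega$.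
   Context: $E$ is finite with discrete topology, $\Omega=E^{\mathbb{Z}}$ has the product topology, $(S\omega)_i=\omega_{i+1}$. For $\omega\in\Omega$, $a\in E$, $\omega^a$ is the configuration equal to $a$ at site $0$ and to $\omega_k$ at $k\ne0$. A continuous $\phi$ has the extensibility property if for all $a,\tilde a\in E$ the functions $\sum_{i=-n}^{n}[\phi(S^i\omega^a)-\phi(S^i\omega^{\tilde a})]$ converge uniformly in $\omega\in\Omega$ as $n\to\infty$. For finite $\Lambda$, $\eta_\Lambda\xi_{\mathbb{Z}\setminus\Lambda}$ denotes the configuration equal to $\eta$ on $\Lambda$ and to $\xi$ off $\Lambda$. *)

From HB Require Import structures.
From mathcomp Require Import all_boot all_order all_algebra.
From mathcomp Require Import all_classical all_reals all_analysis.
From mathcomp Require Import finmap.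
Set Implicit Arguments. Unset Strict Implicit. Unset Printing Implicit Defensive.
Import Order.TTheory GRing.Theory Num.Theory.
Import numFieldNormedType.Exports.
Local Open Scope classical_set_scope.
Local Open Scope ring_scope.

Definition Omega (E : finType) : topologicalType :=
  {ptws int -> discrete_topology E}.

(* S^i for i in Z : (S^i w)_k = w_{k+i}; S = shiftz 1 is the left shift. *)
Definition shiftz (E : finType) (i : int) (w : Omega E) : Omega E :=
  fun k => w (k + i).

Definition upd0 (E : finType) (w : Omega E) (a : E) : Omega E :=
  fun k => if k == 0 then a else w k.

Definition rho_n (R : realType) (E : finType) (phi : Omega E -> R)
    (xi eta : Omega E) (n : nat) : R :=
  \sum_(0 <= j < (2 * n).+1)
     (phi (shiftz (j%:Z - n%:Z) xi) - phi (shiftz (j%:Z - n%:Z) eta)).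

Definition extensible (R : realType) (E : finType) (phi : Omega E -> R) : Prop :=
  forall a a' : E, exists g : Omega E -> R,
    {uniform, (fun n => (fun w : Omega E => rho_n phi (upd0 w a) (upd0 w a') n)) @ \oo --> g}.

Definition glue_cfg (E : finType) (L : {fset int}) (eta : L -> E) (xi : Omega E)
  : Omega E :=
  fun k => if insub k is Some k' then eta k' else xi k.

(* Telescoping splits rho_n(xi, eta) into changes at single sites.  For a change
   at site k, shifting by k turns rho_n into the sum of the extensibility property
   with its summation window moved by k.  Moving a window only trades terms
   phi(S^i xi) - phi(S^i eta) with |i| close to n; these tend to 0 because phi is
   uniformly continuous on the compact space Omega while S^i xi and S^i eta agree
   on ever larger blocks.  Hence each single-site term converges to g(S^k xi),
   where g is the uniform limit given by extensibility, and g is continuous as a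
   uniform limit of continuous functions: this gives the continuity in (3) site by
   site.  The cocycle identity already holds for every rho_n, and translation
   invariance is one more window shift. *)

From HB Require Import structures.
From mathcomp Require Import all_boot all_order all_algebra.
From mathcomp Require Import all_classical all_reals all_analysis.
From mathcomp Require Import finmap.
From mathcomp Require Import zify ring lra.
Import Order.TTheory GRing.Theory Num.Theory.
Import numFieldNormedType.Exports.
Local Open Scope classical_set_scope.
Local Open Scope ring_scope.

Lemma finite_setN_seq (T : eqType) (P : T -> Prop) :
  finite_set [set x | ~ P x] -> exists s : seq T, forall x, x \notin s -> P x.
Proof.
move=> /finite_seqP [s sP]; exists s => x /negP xs; apply/not_notP => nPx.
by apply: xs; have : [set x | ~ P x] x by []; rewrite sP.
Qed.

Section Configurations.
Context {E : finType}.

Definition agree_within (M : nat) (u v : Omega E) :=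
  forall k : int, `|k| <= M%:Z -> u k = v k.

Definition agree_off (s : seq int) (u v : Omega E) :=
  forall k : int, k \notin s -> u k = v k.

Definition upd (k : int) (a : E) (w : Omega E) : Omega E :=
  fun m => if m == k then a else w m.

Lemma Omega_ext (u v : Omega E) : u =1 v -> u = v.
Proof. exact: functional_extensionality_dep. Qed.

Lemma shiftzD i c (w : Omega E) : shiftz i (shiftz c w) = shiftz (i + c) w.
Proof. by apply: Omega_ext => m; rewrite /shiftz addrA. Qed.

Lemma shiftz0 (w : Omega E) : shiftz 0 w = w.
Proof. by apply: Omega_ext => m; rewrite /shiftz addr0. Qed.

Lemma upd_id k (w : Omega E) : upd k (w k) w = w.
Proof. by apply: Omega_ext => m; rewrite /upd; case: eqP => [->|]. Qed.

Lemma shiftz_upd k a (w : Omega E) : shiftz k (upd k a w) = upd0 (shiftz k w) a.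
Proof.
apply: Omega_ext => m; rewrite /shiftz /upd /upd0.
by have -> : (m + k == k) = (m == 0) by lia.
Qed.

Lemma agree_off_glue_cfg (L : {fset int}) (eta zeta : L -> E) xi :
  agree_off L (glue_cfg eta xi) (glue_cfg zeta xi).
Proof. by move=> k kL; rewrite /glue_cfg insubN. Qed.

End Configurations.

Section OmegaTopology.
Context {E : finType}.

Lemma nbhs_coord (v : Omega E) (k : int) : nbhs v [set x : Omega E | x k = v k].
Proof. exact: (@proj_continuous int (fun=> discrete_topology E) k v _ (discrete_set1 _)). Qed.

Lemma continuous_coordwise (X : topologicalType) (f : X -> Omega E) :
  (forall k x, \forall y \near x, f y k = f x k) -> continuous f.
Proof.
move=> fk x; apply/(@pointwise_cvgP (discrete_topology int) (discrete_topology E)) => k.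
exact/discrete_cvg/fk.
Qed.

Lemma near_coord {X : topologicalType} {f : X -> Omega E} :
  continuous f -> forall k x, \forall y \near x, f y k = f x k.
Proof. by move=> cf k x; exact: cf _ _ (nbhs_coord (f x) k). Qed.

Lemma nbhs_agree_within (v : Omega E) (M : nat) :
  nbhs v [set x : Omega E | agree_within M x v].
Proof.
elim: M => [|M IH].
  by apply: filterS (nbhs_coord v 0) => x /= xv k k0; have -> : k = 0 by lia.
apply: filterS (filterI IH (filterI (nbhs_coord v M.+1) (nbhs_coord v (- M.+1%:Z)))).
move=> x [xvM [xvr xvl]] k kM.
have : `|k| <= M%:Z \/ k = M.+1%:Z \/ k = - M.+1%:Z by lia.
by case=> [/xvM|[->|->]].
Qed.

Lemma nbhs_cylinder (v : Omega E) (U : set (Omega E)) :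
  nbhs v U -> exists M : nat, forall x, agree_within M x v -> U x.
Proof.
pose G := filter_from [set: nat] (fun M => [set x : Omega E | agree_within M x v]).
have FG : Filter G.
  apply: filter_from_filter; first by exists 0%N.
  move=> i j _ _; exists (maxn i j) => // x /= xv.
  by split=> k kij; apply: xv; lia.
have : G --> v.
  apply/(@pointwise_cvgP (discrete_topology int) (discrete_topology E)) => k.
  by apply/discrete_cvg; exists `|k|%N => // x /=; apply; lia.
by move=> /(_ U) GU /GU [M _ MU]; exists M => x /MU.
Qed.

Lemma Omega_compact : compact [set: Omega E].
Proof.
have := tychonoff (fun k : int => @finite_compact (discrete_topology E) _ (@finite_finset E setT)).
by congr (compact _); rewrite eqEsubset.
Qed.

Lemma shiftz_continuous (c : int) : continuous (@shiftz E c).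
Proof. by apply: continuous_coordwise => k x; exact: nbhs_coord. Qed.

Lemma upd_continuous {X : topologicalType} {b : X -> E} {A : X -> Omega E} k :
  (forall x, \forall y \near x, b y = b x) -> continuous A ->
  continuous (fun x => upd k (b x) (A x)).
Proof.
move=> cb cA; apply: continuous_coordwise => m x; rewrite /upd.
by case: eqP => _; [exact: cb | exact: near_coord cA m x].
Qed.

Lemma upd0_continuous (a : E) : continuous (fun w : Omega E => upd0 w a).
Proof.
apply: continuous_coordwise => k x; rewrite /upd0.
by case: (k == 0); [near=> y | exact: nbhs_coord].
Unshelve. all: by end_near. Qed.

Lemma glue_cfg_continuous (L : {fset int}) (eta : L -> E) : continuous (glue_cfg eta).
Proof.
apply: continuous_coordwise => k x; rewrite /glue_cfg.
by case: insubP => [? _ _|_]; [near=> y | exact: (nbhs_coord x k)].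
Unshelve. all: by end_near. Qed.

End OmegaTopology.

Section UniformContinuity.
Context {R : realType} {E : finType} {phi : Omega E -> R}.
Hypothesis phi_cont : continuous phi.

Lemma cylinder_uniform_continuity (e : R) : 0 < e ->
  exists N : nat, forall u v, agree_within N u v -> `|phi u - phi v| < e.
Proof.
move=> e0.
have : \forall N \near \oo, [set: Omega E] `<=`
    [set u | forall v, agree_within N u v -> `|phi u - phi v| < e].
  apply: ((compact_near_coveringP _).1 (@Omega_compact E) nat \oo
    (fun N u => forall v, agree_within N u v -> `|phi u - phi v| < e)) => // x _.
  have /nbhs_cylinder [M xM] : \forall y \near x, `|phi x - phi y| < e / 2.
    by have /cvgrPdist_lt := phi_cont x; apply; lra.
  exists ([set u | agree_within M u x], [set N | (M <= N)%N]).
    by split; [exact: nbhs_agree_within | exists M].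
  case=> u N [/= ux MN] v uv.
  have vx : agree_within M v x by move=> k kM; rewrite -uv ?ux //; lia.
  have := xM _ ux; have := xM _ vx.
  move=> /= xv xu.
  have -> : phi u - phi v = (phi x - phi v) - (phi x - phi u) by ring.
  by apply: le_lt_trans (ler_normB _ _) _; lra.
by case=> N _ /(_ N (leqnn N)) NP; exists N => u v; exact: NP.
Qed.

End UniformContinuity.

Section Windows.
Context {R : numFieldType} (F : int -> R).

Definition window (c : int) (n : nat) : R :=
  \sum_(0 <= j < (2 * n).+1) F (j%:Z - n%:Z + c).

Definition vanishes_at_infty := forall e : R, 0 < e ->
  exists N : nat, forall j : int, N%:Z < `|j| -> `|F j| < e.

Lemma window_succ_sub c n :
  window (c + 1) n - window c n = F (n%:Z + 1 + c) - F (c - n%:Z).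
Proof.
have shift : window (c + 1) n = \sum_(0 <= j < (2 * n).+1) F (j.+1%:Z - n%:Z + c).
  by apply: eq_bigr => j _; congr F; lia.
rewrite shift big_nat_recr // [window c n]big_nat_recl //=.
have -> : (2 * n).+1%:Z - n%:Z + c = n%:Z + 1 + c by lia.
have -> : 0%:Z - n%:Z + c = c - n%:Z by lia.
ring.
Qed.

Hypothesis F_vanish : vanishes_at_infty.

Lemma vanishes_at_infty_cvg0 (g : nat -> int) :
  (forall N : nat, \forall n \near \oo, N%:Z < `|g n|) -> F \o g @ \oo --> 0.
Proof.
move=> g_infty; apply/cvgrPdist_lt => e e0.
have [N FN] := F_vanish e e0.
by apply: filterS (g_infty N) => n /FN; rewrite sub0r normrN.
Qed.

Lemma window_succ_sub_cvg0 c : window (c + 1) - window c @ \oo --> 0.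
Proof.
rewrite (_ : _ - _ = (fun n => F (n%:Z + 1 + c) - F (c - n%:Z))); last first.
  by apply/funext => n; rewrite !fctE window_succ_sub.
rewrite -[0]subr0; apply: cvgB; apply: vanishes_at_infty_cvg0 => N;
  by apply: filterS (nbhs_infty_gt (N + `|c|)%N) => n /= Nn; lia.
Qed.

Lemma window_sub_cvg0 c c' : window c - window c' @ \oo --> 0.
Proof.
suff up : forall (d : nat) c, window (c + d%:Z) - window c @ \oo --> 0.
  have [[d ->]|[d ->]] : (exists d : nat, c = c' + d%:Z) \/ (exists d : nat, c' = c + d%:Z).
  - by case: (lerP c' c) => cc'; [left; exists `|c - c'|%N | right; exists `|c' - c|%N]; lia.
  - exact: up.
  - rewrite -oppr0 (_ : _ - _ = - (window (c + d%:Z) - window c)).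
      exact: cvgN (up _ _).
    by apply/funext => n; rewrite !fctE opprB.
move=> d {}c; elim: d => [|d IH].
  by rewrite addr0 subrr; exact: cvg_cst.
have -> : c + d.+1%:Z = c + d%:Z + 1 by lia.
rewrite (_ : _ - _ = (window (c + d%:Z + 1) - window (c + d%:Z)) + (window (c + d%:Z) - window c)).
  by rewrite -[0]addr0; apply: cvgD => //; exact: window_succ_sub_cvg0.
by apply/funext => n; rewrite !fctE; ring.
Qed.

Lemma window_cvg_shift c c' (l : R) : window c @ \oo --> l -> window c' @ \oo --> l.
Proof. exact: cvg_sub0 (window_sub_cvg0 c' c). Qed.

End Windows.

Definition phi_diff {R : realType} {E : finType} (phi : Omega E -> R)
    (xi eta : Omega E) (i : int) : R :=
  phi (shiftz i xi) - phi (shiftz i eta).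

Section Rho.
Context {R : realType} {E : finType} {phi : Omega E -> R}.
Hypothesis phi_cont : continuous phi.

Lemma rho_n_shiftz xi eta c :
  rho_n phi (shiftz c xi) (shiftz c eta) = window (phi_diff phi xi eta) c.
Proof. by apply/funext => n; apply: eq_bigr => j _; rewrite /phi_diff !shiftzD. Qed.

Lemma rho_n_window xi eta : rho_n phi xi eta = window (phi_diff phi xi eta) 0.
Proof. by rewrite -rho_n_shiftz !shiftz0. Qed.

Lemma rho_n_cocycle xi eta zeta :
  rho_n phi xi zeta = rho_n phi xi eta + rho_n phi eta zeta.
Proof.
apply/funext => n; rewrite /rho_n !fctE -big_split.
by apply: eq_bigr => j _ /=; rewrite addrA subrK.
Qed.

Lemma rho_nxx u : rho_n phi u u = cst 0.
Proof. by apply/funext => n; apply: big1 => j _; rewrite subrr. Qed.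

Lemma phi_diff_vanishes {s xi eta} :
  agree_off s xi eta -> vanishes_at_infty (phi_diff phi xi eta).
Proof.
move=> xi_eta e e0; have [N phiN] := cylinder_uniform_continuity phi_cont e e0.
have [M sM] : exists M, forall k, k \in s -> (`|k| <= M)%N.
  by exists (\max_(k <- s) `|k|%N) => k ks; rewrite (leq_bigmax_seq k).
exists (N + M)%N => j jN; apply: phiN => m mN.
by apply: xi_eta; apply/negP => /sM; move: jN mN; clear; lia.
Qed.

Lemma rho_n_shiftz_cvgP {s xi eta} c (l : R) : agree_off s xi eta ->
  rho_n phi (shiftz c xi) (shiftz c eta) @ \oo --> l <-> rho_n phi xi eta @ \oo --> l.
Proof.
move=> /phi_diff_vanishes vanish; rewrite rho_n_shiftz rho_n_window.
by split; apply: window_cvg_shift.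
Qed.

Lemma rho_n_upd_cvg {xi k a} {g : Omega E -> R} :
  {uniform, (fun n w => rho_n phi (upd0 w (xi k)) (upd0 w a) n) @ \oo --> g} ->
  rho_n phi xi (upd k a xi) @ \oo --> g (shiftz k xi).
Proof.
move=> /pointwise_uniform_cvg /pointwise_cvgP /(_ (shiftz k xi)) g_lim.
have off_k : agree_off [:: k] xi (upd k a xi).
  by move=> m; rewrite inE /upd => /negbTE ->.
apply/(rho_n_shiftz_cvgP k _ off_k).
by rewrite -{1}(upd_id k xi) !shiftz_upd.
Qed.

Lemma continuous_rho_n_upd0 a b n :
  continuous (fun w : Omega E => rho_n phi (upd0 w a) (upd0 w b) n).
Proof.
apply: (continuous_big add_continuous) => j _ w.
have phi_upd c : continuous (fun x : Omega E => phi (shiftz (j%:Z - n%:Z) (upd0 x c))).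
  have su : continuous (fun y : Omega E => shiftz (j%:Z - n%:Z) (upd0 y c)).
    by move=> y; exact: continuous_comp (upd0_continuous c y) (shiftz_continuous _ _).
  by move=> x; exact: continuous_comp (su x) (phi_cont _).
exact: cvgB (phi_upd a w) (phi_upd b w).
Qed.

Lemma uniform_limit_rho_n_upd0_continuous a b (g : Omega E -> R) :
  {uniform, (fun n w => rho_n phi (upd0 w a) (upd0 w b) n) @ \oo --> g} ->
  continuous g.
Proof.
apply: uniform_limit_continuous.
by exists 0%N => // n _; exact: continuous_rho_n_upd0.
Qed.

Hypothesis phi_ext : extensible phi.

Lemma cvg_rho_n {s xi eta} : agree_off s xi eta -> cvgn (rho_n phi xi eta).
Proof.
elim: s xi => [|k s IH] xi xi_eta.
  rewrite (_ : eta = xi); last by apply: Omega_ext => m; rewrite xi_eta.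
  by rewrite rho_nxx; exact: is_cvg_cst.
rewrite (rho_n_cocycle _ (upd k (eta k) xi)); apply: is_cvgD.
  have [g g_lim] := phi_ext (xi k) (eta k).
  exact: cvgP (rho_n_upd_cvg g_lim).
apply: IH => m ms; rewrite /upd; case: eqP => [->//|/eqP mk].
by apply: xi_eta; rewrite inE negb_or mk.
Qed.

Lemma lim_rho_n_cocycle {s xi eta zeta} :
  agree_off s xi eta -> agree_off s eta zeta ->
  limn (rho_n phi xi zeta) = limn (rho_n phi xi eta) + limn (rho_n phi eta zeta).
Proof.
move=> xi_eta eta_zeta; rewrite (rho_n_cocycle _ eta) limD //.
- exact: cvg_rho_n xi_eta.
- exact: cvg_rho_n eta_zeta.
Qed.

Lemma lim_rho_n_shiftz {s xi eta} c : agree_off s xi eta ->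
  limn (rho_n phi (shiftz c xi) (shiftz c eta)) = limn (rho_n phi xi eta).
Proof.
move=> xi_eta; apply/cvg_lim => //.
by apply/(rho_n_shiftz_cvgP c _ xi_eta); exact: cvg_rho_n xi_eta.
Qed.

Lemma continuous_lim_rho_n_upd {X : topologicalType} {A : X -> Omega E} {b : X -> E} k :
  continuous A -> (forall x, \forall y \near x, b y = b x) ->
  continuous (fun x => limn (rho_n phi (A x) (upd k (b x) (A x)))).
Proof.
move=> cA cb x; have [g g_lim] := phi_ext (A x k) (b x).
have lim_g y : A y k = A x k -> b y = b x ->
    limn (rho_n phi (A y) (upd k (b y) (A y))) = g (shiftz k (A y)).
  move=> Ayk byx; apply/cvg_lim => //; rewrite byx.
  by apply: rho_n_upd_cvg; rewrite Ayk.
rewrite /continuous_at lim_g //.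
apply: (cvg_trans (near_eq_cvg (f := fun y => g (shiftz k (A y))) _)).
  by near=> y; rewrite lim_g //; near: y; [exact: near_coord cA k x | exact: cb].
apply: continuous_comp (continuous_comp (cA x) (shiftz_continuous k _)) _.
exact: uniform_limit_rho_n_upd0_continuous g_lim _.
Unshelve. all: by end_near.
Qed.

Lemma continuous_lim_rho_n {X : topologicalType} {s} {A B : X -> Omega E} :
  continuous A -> continuous B -> (forall x, agree_off s (A x) (B x)) ->
  continuous (fun x => limn (rho_n phi (A x) (B x))).
Proof.
elim: s A => [|k s IH] A cA cB AB.
  rewrite (_ : (fun x => _) = cst 0); first exact: cst_continuous.
  apply/funext => x; rewrite (_ : B x = A x) ?rho_nxx ?lim_cst //.
  by apply: Omega_ext => m; rewrite AB.
pose M x := upd k (B x k) (A x).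
have AMB x : limn (rho_n phi (A x) (B x)) =
    limn (rho_n phi (A x) (M x)) + limn (rho_n phi (M x) (B x)).
  apply: (@lim_rho_n_cocycle (k :: s)) => m; rewrite inE negb_or => /andP [mk ms].
    by rewrite /M /upd (negbTE mk).
  by rewrite /M /upd (negbTE mk); apply: AB; rewrite inE negb_or mk.
rewrite (funext AMB) => x; apply: cvgD.
  exact: continuous_lim_rho_n_upd cA (near_coord cB k) x.
apply: (IH M (upd_continuous k (near_coord cB k) cA) cB) => y m ms.
rewrite /M /upd; case: eqP => [->//|/eqP mk].
by apply: AB; rewrite inE negb_or mk.
Qed.

End Rho.

Theorem proposition4p1 (R : realType) (E : finType) (phi : Omega E -> R)
  (phi_cont : continuous phi) (phi_ext : extensible phi) :
  (forall xi eta : Omega E, finite_set [set k | xi k <> eta k] ->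
     cvgn (rho_n phi xi eta)) /\
  (forall xi eta zeta : Omega E,
     finite_set [set k | ~ (xi k = eta k /\ eta k = zeta k)] ->
     limn (rho_n phi xi zeta) =
       limn (rho_n phi xi eta) + limn (rho_n phi eta zeta)) /\
  (forall xi eta : Omega E, finite_set [set k | xi k <> eta k] ->
     limn (rho_n phi xi eta) = limn (rho_n phi (shiftz 1 xi) (shiftz 1 eta))) /\
  (forall (L : {fset int}) (eta zeta : L -> E),
     continuous (fun xi : Omega E =>
       limn (rho_n phi (glue_cfg eta xi) (glue_cfg zeta xi)))).
Proof.
split; [|split; [|split]].
- by move=> xi eta /finite_setN_seq [s] /(cvg_rho_n phi_cont phi_ext).
- move=> xi eta zeta /finite_setN_seq [s agree].
  by apply: (lim_rho_n_cocycle phi_cont phi_ext) => k /agree [].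
- by move=> xi eta /finite_setN_seq [s] /(lim_rho_n_shiftz phi_cont phi_ext 1) ->.
- move=> L eta zeta; apply: (continuous_lim_rho_n phi_cont phi_ext);
    [exact: glue_cfg_continuous .. | exact: agree_off_glue_cfg].
Qed.
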